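(* Let $n\ge 1$, let $\mathcal P$ and $\mathcal Q$ be weak orthogonal quantum Latin squares of order $n$ with vector entries $\ket{P_{ij}}$ and $\ket{Q_{ij}}$, and let $(H_k)_{k=0}^{n-1}$ and $(G_j)_{j=0}^{n-1}$ be two indexed families of $n\times n$ Hadamard matrices. Then the bases $B(\mathcal Q,(H_k))$ and $B(\mathcal P,(G_j))$ of $\mathbb C^n\otimes\mathbb C^n$ are mutually unbiased, i.e. for every state $\ket a$ of $B(\mathcal Q,(H_k))$ and every state $\ket b$ of $B(\mathcal P,(G_j))$ we have $|\langle a|b\rangle|^2=\frac{1}{n^2}$.
   Context: Let $\{\ket k : k=0,\dots,n-1\}$ be the computational basis of $\mathbb C^n$. A quantum Latin square (QLS) of order $n$ is an $n\times n$ array of vectors of $\mathbb C^n$ such that every row and every column is an orthonormal basis of $\mathbb C^n$; the vector in the $i$-th column and $j$-th row of a QLS $\mathcal Q$ is written $\ket{Q_{ij}}$ (indices $0,\dots,n-1$). Two QLSs $\mathcal P,\mathcal Q$ of order $n$ are weak orthogonal if for all $i,j\in\{0,\dots,n-1\}$ there is a unique $t\in\{0,\dots,n-1\}$ with $\sum_{k=0}^{n-1}\ket k\,\langle Q_{ki}|P_{kj}\rangle=\ket t$ (equivalently: for the $i$-th row of $\mathcal Q$ and $j$-th row of $\mathcal P$, the $n$ componentwise inner products are $n-1$ zeros and a single $1$). A Hadamard matrix of order $n$ is an $n\times n$ complex matrix $H$ with $|H_{ij}|=1$ for all $i,j$ and $HH^\dagger=H^\dagger H=n\,I_n$. Given a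 QLS $\mathcal Q$ and a family $(H_j)_{j=0}^{n-1}$ of Hadamards of order $n$, the quantum Latin square maximally entangled basis $B(\mathcal Q,(H_j))$ is the family of vectors $A_{ij}=\frac{1}{\sqrt n}\sum_{k=0}^{n-1}\ket k\otimes \ket{Q_{kj}}\bra k H_j\ket i$, $i,j\in\{0,\dots,n-1\}$, in $\mathbb C^n\otimes\mathbb C^n$ (this is an orthonormal basis of maximally entangled states). *)

From mathcomp Require Import all_boot all_order all_algebra.
Set Implicit Arguments. Unset Strict Implicit. Unset Printing Implicit Defensive.
Import Order.TTheory GRing.Theory Num.Theory.
Local Open Scope ring_scope.

(* Vectors of C^n : functions 'I_n -> C (coordinates in the computational basis). *)
Definition vecC (C : numClosedFieldType) (n : nat) := 'I_n -> C.

Definition inner (C : numClosedFieldType) (n : nat) (u v : vecC C n) : C :=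
  \sum_(k < n) (u k)^* * v k.

Definition ket (C : numClosedFieldType) (n : nat) (t : 'I_n) : vecC C n :=
  fun k => (k == t)%:R.

(* A family of n vectors of C^n is an orthonormal basis iff it is orthonormal
   (n orthonormal vectors in C^n are automatically a basis). *)
Definition orthonormal_basis (C : numClosedFieldType) (n : nat)
  (f : 'I_n -> vecC C n) : Prop :=
  forall a b : 'I_n, inner (f a) (f b) = (a == b)%:R.

(* A QLS: Q i j is the vector |Q_ij> in column i, row j. *)
Definition QLS (C : numClosedFieldType) (n : nat)
  (Q : 'I_n -> 'I_n -> vecC C n) : Prop :=
  (forall j : 'I_n, orthonormal_basis (fun i => Q i j)) /\
  (forall i : 'I_n, orthonormal_basis (fun j => Q i j)).

Definition weak_orthogonal (C : numClosedFieldType) (n : nat)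
  (P Q : 'I_n -> 'I_n -> vecC C n) : Prop :=
  forall i j : 'I_n, exists! t : 'I_n,
    (fun k : 'I_n => inner (Q k i) (P k j)) = ket C t.

Definition hadamard (C : numClosedFieldType) (n : nat) (H : 'M[C]_n) : Prop :=
  (forall i j, `|H i j| = 1) /\
  H *m (map_mx Num.conj H^T) = (n%:R)%:M /\
  (map_mx Num.conj H^T) *m H = (n%:R)%:M.

(* Vectors of C^n (x) C^n : coordinates indexed by pairs (k,l) ~ |k> (x) |l>. *)
Definition vec2C (C : numClosedFieldType) (n : nat) := 'I_n -> 'I_n -> C.

Definition inner2 (C : numClosedFieldType) (n : nat) (u v : vec2C C n) : C :=
  \sum_(k < n) \sum_(l < n) (u k l)^* * v k l.

(* A_ij = 1/sqrt n * sum_k |k> (x) |Q_kj> <k|H_j|i>. *)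
Definition qls_meb (C : numClosedFieldType) (n : nat)
  (Q : 'I_n -> 'I_n -> vecC C n) (H : 'I_n -> 'M[C]_n) (i j : 'I_n) : vec2C C n :=
  fun k l => (sqrtC (n%:R : C))^-1 * (Q k j l * H j k i).

From mathcomp Require Import all_boot all_order all_algebra.
From mathcomp Require Import ring.
Import Order.TTheory GRing.Theory Num.Theory.
Set Implicit Arguments. Unset Strict Implicit.
Local Open Scope ring_scope.

(* Expanding <A_ij | B_i'j'> gives (1/n) sum_k conj(H_j[k,i]) G_j'[k,i'] <Q_kj|P_kj'>.
   Weak orthogonality says exactly that the vector (<Q_kj|P_kj'>)_k is a
   computational basis vector |t>, so the sum collapses to the single term k = t,
   a product of two Hadamard entries of modulus 1. Hence |<A|B>|^2 = 1/n^2. *)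

Lemma sum_mul_delta (R : pzSemiRingType) (I : finType) (F : I -> R) (t : I) :
  \sum_k F k * (k == t)%:R = F t.
Proof.
rewrite (bigD1 t) //= eqxx mulr1 big1 ?addr0 // => k /negbTE ->.
by rewrite mulr0.
Qed.

Section MaximallyEntangledBases.

Variables (C : numClosedFieldType) (n : nat).
Implicit Types (P Q : 'I_n -> 'I_n -> vecC C n) (H G : 'I_n -> 'M[C]_n).

Lemma norm_invsqrtC_nat_sqr : `|(sqrtC (n%:R : C))^-1| ^+ 2 = (n%:R)^-1.
Proof. by rewrite normfV ger0_norm ?sqrtC_ge0 ?ler0n // exprVn sqrtCK. Qed.

Lemma inner2_qls_meb P Q H G (i j i' j' : 'I_n) :
  inner2 (qls_meb Q H i j) (qls_meb P G i' j') =
  (n%:R)^-1 * \sum_(k < n) (H j k i)^* * G j' k i' * inner (Q k j) (P k j').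
Proof.
rewrite -norm_invsqrtC_nat_sqr normCKC mulr_sumr /inner2.
apply: eq_bigr => k _; rewrite /inner !mulr_sumr; apply: eq_bigr => l _.
by rewrite /qls_meb !rmorphM /=; ring.
Qed.

Lemma weak_orthogonal_delta P Q (j j' : 'I_n) : weak_orthogonal P Q ->
  exists t : 'I_n, forall k, inner (Q k j) (P k j') = (k == t)%:R.
Proof.
move=> /(_ j j') [t [Ht _]]; exists t => k.
exact: (congr1 (fun f => f k) Ht).
Qed.

Lemma hadamard_norm_entry (M : 'M[C]_n) :
  hadamard M -> forall i j, `|M i j| = 1.
Proof. by case. Qed.

End MaximallyEntangledBases.

Theorem theorem13 (C : numClosedFieldType) (n : nat) (hn : (1 <= n)%N)
  (P Q : 'I_n -> 'I_n -> vecC C n) (H G : 'I_n -> 'M[C]_n) :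
  QLS P -> QLS Q -> weak_orthogonal P Q ->
  (forall k, hadamard (H k)) -> (forall j, hadamard (G j)) ->
  forall i j i' j' : 'I_n,
    `| inner2 (qls_meb Q H i j) (qls_meb P G i' j') | ^+ 2 = ((n ^ 2)%N%:R)^-1.
Proof.
move=> _ _ PQ HH HG i j i' j'.
have [t Ht] := weak_orthogonal_delta j j' PQ.
rewrite inner2_qls_meb.
under eq_bigr => k _ do rewrite Ht.
rewrite sum_mul_delta !normrM norm_conjC.
rewrite (hadamard_norm_entry (HH j)) (hadamard_norm_entry (HG j')).
by rewrite !mulr1 normfV normr_nat exprVn natrX.
Qed.
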